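(* Let $H=\sum_{a=1}^M H_a$ be a stoquastic frustration-free Hamiltonian on $\mathcal{Q}^n$ and let $\Pi_a$ be the spectral projector of $H_a$ onto its zero eigenvalue. Suppose $H|\psi\rangle=0$ for some non-negative state $|\psi\rangle$. If for some $x\in\mathcal{S}(\psi)$, $y\in\{0,1\}^n$ and $a\in\{1,\ldots,M\}$ one has $\langle y|H_a|x\rangle<0$, then $y\in\mathcal{S}(\psi)$ and $$\frac{\langle y|\psi\rangle}{\langle x|\psi\rangle}=\sqrt{\frac{\langle y|\Pi_a|y\rangle}{\langle x|\Pi_a|x\rangle}}.$$
   Context: $\mathcal{Q}^n=(\mathbb{C}^2)^{\otimes n}$ with standard basis $\{|x\rangle\}$, $x\in\{0,1\}^n$. $H=\sum_a H_a$ is a local Hamiltonian (each $H_a$ acts non-trivially on $O(1)$ qubits). It is stoquastic if each $H_a$ has real non-positive off-diagonal entries in the standard basis, and frustration-free if each $H_a$ is positive semidefinite and the ground-state of $H$ is a zero eigenvector of every $H_a$. A non-negative state is a normalized vector with real non-negative amplitudes in the standard basis; its support is $\mathcal{S}(\psi)=\{x:\langle x|\psi\rangle>0\}$. *)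

From HB Require Import structures.
From mathcomp Require Import all_boot all_order all_algebra.
Set Implicit Arguments. Unset Strict Implicit. Unset Printing Implicit Defensive.
Import Order.TTheory GRing.Theory Num.Theory.
Local Open Scope ring_scope.

(* Scalars: C is any numerically closed field (e.g. the complex numbers).
   In such a field, [z <= 0] means "z is real and non-positive" and
   [0 <= z] means "z is real and non-negative". *)

Section QubitDefs.
Variable C : numClosedFieldType.
Variable n : nat.

Definition bits := {ffun 'I_n -> bool}.

(* Vectors of Q^n = (C^2)^{⊗n} in the standard basis: <x|v> = v x. *)
Definition qvec := bits -> C.
(* Operators on Q^n in the standard basis: <x|A|y> = A x y. *)
Definition qop := bits -> bits -> C.

Definition apply_op (A : qop) (v : qvec) : qvec :=
  fun x => \sum_(y : bits) A x y * v y.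

Definition comp_op (A B : qop) : qop :=
  fun x z => \sum_(y : bits) A x y * B y z.

Definition sum_op (M : nat) (Hs : 'I_M -> qop) : qop :=
  fun x y => \sum_(a < M) Hs a x y.

Definition zero_vec (v : qvec) : Prop := forall x, v x = 0.

Definition inner (v w : qvec) : C := \sum_(x : bits) (v x)^* * w x.

Definition self_adjoint (A : qop) : Prop := forall x y, A y x = (A x y)^*.

Definition psd (A : qop) : Prop :=
  self_adjoint A /\ forall v : qvec, 0 <= inner v (apply_op A v).

Definition stoquastic (M : nat) (Hs : 'I_M -> qop) : Prop :=
  forall a x y, x != y -> Hs a x y <= 0.

Definition ground_state (A : qop) (g : qvec) : Prop :=
  ~ zero_vec g /\
  exists E : C, (forall x, apply_op A g x = E * g x) /\
    forall (E' : C) (v : qvec), ~ zero_vec v ->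
      (forall x, apply_op A v x = E' * v x) -> E <= E'.

Definition frustration_free (M : nat) (Hs : 'I_M -> qop) : Prop :=
  (forall a, psd (Hs a)) /\
  forall g, ground_state (sum_op Hs) g -> forall a, zero_vec (apply_op (Hs a) g).

(* P is the spectral projector of A onto its zero eigenvalue, i.e. the
   orthogonal projector (self_adjoint idempotent) whose range is ker A. *)
Definition zero_eig_projector (A P : qop) : Prop :=
  self_adjoint P /\ comp_op P P = P /\
  forall v : qvec, zero_vec (apply_op A v) <-> (forall x, apply_op P v x = v x).

Definition nonneg_state (psi : qvec) : Prop :=
  (forall x, 0 <= psi x) /\ inner psi psi = 1.

Definition qsupport (psi : qvec) : pred bits := fun x => 0 < psi x.

End QubitDefs.

From HB Require Import structures.
From mathcomp Require Import all_boot all_order all_algebra.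
From mathcomp Require Import ring.
Set Implicit Arguments. Unset Strict Implicit. Unset Printing Implicit Defensive.
Import Order.TTheory GRing.Theory Num.Theory.
Local Open Scope ring_scope.

(* Frustration-freeness makes psi a common zero vector of every term H_a.
   For a PSD operator K with non-positive off-diagonal entries, the kernel is
   closed under entrywise absolute value, since <|w|, K|w|> <= Re <w, K w>.
   Hence if w lies in ker K and vanishes at x, then the x-th entry of K|w| is a
   sum of non-positive terms adding up to 0, so w vanishes at every y with
   <x|K|y> < 0.  Applied to w = psi(x) v - v(x) psi, every v in ker K satisfies
   v(y) psi(x) = v(x) psi(y); taking for v the columns of the projector onto
   ker K shows that row y of Pi_a is psi(y)/psi(x) times row x, whence
   Pi_a(y,y) = (psi(y)/psi(x))^2 Pi_a(x,x). *)

Section StoquasticOperators.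
Variable C : numClosedFieldType.
Variable n : nat.
Local Notation bits := (bits n).
Local Notation qvec := (qvec C n).
Local Notation qop := (qop C n).

Definition ket (e : bits) : qvec := fun z => (z == e)%:R.

Definition absv (w : qvec) : qvec := fun z => `|w z|.

Definition stoquastic_op (K : qop) : Prop := forall z t, z != t -> K z t <= 0.

Lemma apply_op_ket (A : qop) e z : apply_op A (ket e) z = A z e.
Proof.
rewrite /apply_op (bigD1 e) //= /ket eqxx mulr1 big1 ?addr0 // => t /negbTE ->.
by rewrite mulr0.
Qed.

Lemma inner_ket (e : bits) (v : qvec) : inner (ket e) v = v e.
Proof.
rewrite /inner (bigD1 e) //= /ket eqxx conjC_nat mul1r big1 ?addr0 // => t /negbTE ->.
by rewrite conjC_nat mul0r.
Qed.

Lemma apply_op_lin (A : qop) (u v : qvec) (s t : C) z :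
  apply_op A (fun w => s * u w + t * v w) z = s * apply_op A u z + t * apply_op A v z.
Proof. by rewrite /apply_op !mulr_sumr -big_split /=; apply: eq_bigr => w _; ring. Qed.

Lemma eq_inner (u v w : qvec) : (forall z, v z = w z) -> inner u v = inner u w.
Proof. by move=> vw; apply: eq_bigr => z _; rewrite vw. Qed.

Lemma inner_addl (u v w : qvec) t :
  inner (fun z => u z + t * v z) w = inner u w + t^* * inner v w.
Proof.
rewrite /inner mulr_sumr -big_split /=; apply: eq_bigr => z _.
by rewrite rmorphD rmorphM /=; ring.
Qed.

Lemma inner_addr (u v w : qvec) t :
  inner u (fun z => v z + t * w z) = inner u v + t * inner u w.
Proof. by rewrite /inner mulr_sumr -big_split /=; apply: eq_bigr => z _; ring. Qed.

Lemma inner_self_ge0 (v : qvec) : 0 <= inner v v.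
Proof. by apply: sumr_ge0 => z _; rewrite mulrC mul_conjC_ge0. Qed.

Lemma inner_self_eq0 (v : qvec) : inner v v = 0 -> zero_vec v.
Proof.
move=> v0 z; have hge i : predT i -> 0 <= (v i)^* * v i.
  by rewrite mulrC mul_conjC_ge0.
have := psumr_eq0P hge v0 (i := z) isT.
by rewrite mulrC => /eqP; rewrite mul_conjC_eq0 => /eqP.
Qed.

Lemma psd_diag_ge0 (A : qop) e : psd A -> 0 <= A e e.
Proof. by case=> _ /(_ (ket e)); rewrite inner_ket apply_op_ket. Qed.

Lemma psd_form_add_ket (A : qop) (u : qvec) e (t : C) : self_adjoint A ->
  inner (fun z => u z + t * ket e z) (apply_op A (fun z => u z + t * ket e z)) =
  inner u (apply_op A u) + t^* * apply_op A u e + t * (apply_op A u e)^*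
  + t^* * t * A e e.
Proof.
move=> Asa.
have lin z : apply_op A (fun w => u w + t * ket e w) z =
             apply_op A u z + t * A z e.
  rewrite -apply_op_ket /apply_op mulr_sumr -big_split /=.
  by apply: eq_bigr => w _; ring.
have cross : inner u (fun z => A z e) = (apply_op A u e)^*.
  rewrite /inner /apply_op rmorph_sum; apply: eq_bigr => z _.
  by rewrite Asa rmorphM /= mulrC.
rewrite (eq_inner _ lin) inner_addl !inner_addr cross !inner_ket.
by ring.
Qed.

Lemma psd_kernel (A : qop) (u : qvec) :
  psd A -> inner u (apply_op A u) = 0 -> zero_vec (apply_op A u).
Proof.
move=> [Asa Apos] u0 e; set b := apply_op A u e; set h := A e e.
have h0 : 0 <= h by apply: psd_diag_ge0.
(* Perturb u along ket e by t = - s b with s = 1/(h+1): the form becomes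
   s |b|^2 (s h - 2), negative unless b = 0. *)
set s := (h + 1)^-1.
have s_gt0 : 0 < s by rewrite invr_gt0 ltr_wpDl.
have sh_lt2 : s * h - 2 < 0.
  rewrite subr_lt0 (@le_lt_trans _ _ 1) ?ltr1n //.
  by rewrite /s mulrC ler_pdivrMr ?mul1r ?lerDl // ltr_wpDl.
have s_conj : s^* = s by apply/conj_Creal/gtr0_real.
have := Apos (fun z => u z + (- s * b) * ket e z).
rewrite psd_form_add_ket // u0 -/b -/h rmorphM rmorphN /= s_conj.
have -> : 0 + (- s * b^*) * b + - s * b * b^* + - s * b^* * (- s * b) * h
  = s * (b * b^*) * (s * h - 2) by ring.
rewrite -mulrA pmulr_rge0 // => form_ge0.
have /eqP : b * b^* * (s * h - 2) = 0.
  by apply/eqP; rewrite eq_le form_ge0 andbT mulr_ge0_le0 ?mul_conjC_ge0 ?ltW.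
by rewrite mulf_eq0 (negbTE (ltr0_neq0 sh_lt2)) orbF mul_conjC_eq0 => /eqP.
Qed.

Lemma form_absv_le (K : qop) (w : qvec) : psd K -> stoquastic_op K ->
  inner (absv w) (apply_op K (absv w)) <= 'Re (inner w (apply_op K w)).
Proof.
move=> Kpsd Ksto; rewrite /inner raddf_sum; apply: ler_sum => z _.
rewrite conj_Creal ?normr_real // /apply_op !mulr_sumr raddf_sum /=.
apply: ler_sum => t _; rewrite /absv; case: (eqVneq z t) => [<- | zt].
  have -> : (w z)^* * (K z z * w z) = K z z * `|w z| ^+ 2 by rewrite normCK; ring.
  have /Creal_ReP -> : K z z * `|w z| ^+ 2 \is Num.real.
    by rewrite rpredM ?rpredX ?normr_real // ger0_real // psd_diag_ge0.
  by rewrite expr2 mulrCA.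
have Kzt_real : K z t \is Num.real by apply/ler0_real/Ksto.
rewrite [(w z)^* * _]mulrCA (ReMl Kzt_real) [`|w z| * _]mulrCA -norm_conjC -normrM.
by apply: ler_wnM2l; [exact: Ksto | exact: (leif_Re_Creal _).1].
Qed.

Lemma kernel_absv (K : qop) (w : qvec) : psd K -> stoquastic_op K ->
  zero_vec (apply_op K w) -> zero_vec (apply_op K (absv w)).
Proof.
move=> Kpsd Ksto Kw; apply: psd_kernel => //; apply/le_anti.
rewrite Kpsd.2 andbT (le_trans (form_absv_le w Kpsd Ksto)) //.
by rewrite /inner big1 ?raddf0 // => z _; rewrite Kw mulr0.
Qed.

Lemma kernel_vanish_adjacent (K : qop) (w : qvec) x y :
  psd K -> stoquastic_op K -> zero_vec (apply_op K w) ->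
  w x = 0 -> K x y < 0 -> w y = 0.
Proof.
move=> Kpsd Ksto Kw wx Kxy.
have terms_ge0 t : predT t -> 0 <= - (K x t * `|w t|).
  case: (eqVneq t x) => [-> | tx]; first by rewrite wx normr0 mulr0 oppr0.
  by rewrite oppr_ge0 mulr_le0_ge0 // Ksto // eq_sym.
have sum0 : \sum_(t | predT t) - (K x t * `|w t|) = 0.
  by rewrite sumrN -[X in - X]/(apply_op K (absv w) x) (kernel_absv Kpsd Ksto Kw x) oppr0.
move/eqP: (psumr_eq0P terms_ge0 sum0 (i := y) isT).
by rewrite oppr_eq0 mulf_eq0 (negbTE (ltr0_neq0 Kxy)) normr_eq0 => /eqP.
Qed.

Lemma kernel_proportional (K : qop) (psi v : qvec) x y :
  psd K -> stoquastic_op K ->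
  zero_vec (apply_op K psi) -> zero_vec (apply_op K v) -> K x y < 0 ->
  psi x * v y = v x * psi y.
Proof.
move=> Kpsd Ksto Kpsi Kv Kxy.
have Kw : zero_vec (apply_op K (fun z => psi x * v z + - v x * psi z)).
  by move=> z; rewrite apply_op_lin Kv Kpsi !mulr0 addr0.
have wx : psi x * v x + - v x * psi x = 0 by rewrite mulNr mulrC subrr.
have /eqP := kernel_vanish_adjacent Kpsd Ksto Kw wx Kxy.
by rewrite mulNr subr_eq0 => /eqP.
Qed.

Lemma stoquastic_kernel_pos (K : qop) (psi : qvec) x y :
  stoquastic_op K -> (forall z, 0 <= psi z) -> zero_vec (apply_op K psi) ->
  0 < psi x -> K y x < 0 -> 0 < psi y.
Proof.
move=> Ksto psi_ge0 Kpsi psix Kyx; case: (eqVneq x y) => [<- // | xy].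
rewrite lt_def psi_ge0 andbT; apply/eqP => psiy0.
have : apply_op K psi y <= K y x * psi x.
  rewrite /apply_op (bigD1 y) //= psiy0 mulr0 add0r (bigD1 x) //= gerDl.
  by apply: sumr_le0 => z /andP [zy _]; rewrite mulr_le0_ge0 // Ksto // eq_sym.
have neg : K y x * psi x < 0 by rewrite pmulr_llt0.
by rewrite Kpsi => /(lt_le_trans neg); rewrite ltxx.
Qed.

Lemma inner_sum_op M (Hs : 'I_M -> qop) (v : qvec) :
  inner v (apply_op (sum_op Hs) v) = \sum_a inner v (apply_op (Hs a) v).
Proof.
rewrite /inner /apply_op /sum_op exchange_big /=; apply: eq_bigr => z _.
rewrite -mulr_sumr exchange_big /=; congr (_ * _).
by apply: eq_bigr => t _; rewrite mulr_suml.
Qed.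

Lemma zero_energy_ground_state M (Hs : 'I_M -> qop) (psi : qvec) :
  (forall a, psd (Hs a)) -> zero_vec (apply_op (sum_op Hs) psi) ->
  ~ zero_vec psi -> ground_state (sum_op Hs) psi.
Proof.
move=> Hpsd Hpsi psi_neq0; split=> //; exists 0; split=> [z | E v v_neq0 HvE].
  by rewrite Hpsi mul0r.
have vv_gt0 : 0 < inner v v.
  by rewrite lt_def inner_self_ge0 andbT; apply/eqP => /inner_self_eq0.
rewrite -(pmulr_lge0 _ vv_gt0).
have -> : E * inner v v = inner v (apply_op (sum_op Hs) v).
  by rewrite /inner mulr_sumr; apply: eq_bigr => z _; rewrite HvE; ring.
by rewrite inner_sum_op; apply: sumr_ge0 => a _; exact: (Hpsd a).2.
Qed.

Lemma projector_column_kernel (K P : qop) z :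
  zero_eig_projector K P -> zero_vec (apply_op K (fun w => P w z)).
Proof.
case=> _ [Pidem PkerK]; apply/PkerK => w.
by rewrite -[RHS](congr1 (fun Q => Q w z) Pidem).
Qed.

Lemma projector_diag_neq0 (K P : qop) (v : qvec) x :
  zero_eig_projector K P -> zero_vec (apply_op K v) -> v x != 0 -> P x x != 0.
Proof.
case=> Psa [Pidem PkerK] Kv; apply: contra_neq => Pxx0.
(* P = P^* P gives P x x = \sum_u |P u x|^2. *)
have col0 : zero_vec (fun u => P u x).
  apply: inner_self_eq0; rewrite -Pxx0 -[RHS](congr1 (fun Q => Q x x) Pidem).
  by apply: eq_bigr => u _; rewrite [P x u]Psa.
rewrite -((PkerK v).1 Kv x) /apply_op big1 // => u _.
by rewrite Psa col0 conjC0 mul0r.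
Qed.

Lemma projector_diag_ratio (K P : qop) (psi : qvec) x y :
  psd K -> stoquastic_op K -> zero_eig_projector K P ->
  zero_vec (apply_op K psi) -> psi x \is Num.real -> psi y \is Num.real ->
  K x y < 0 -> P y y * psi x ^+ 2 = P x x * psi y ^+ 2.
Proof.
move=> Kpsd Ksto KP Kpsi psix_real psiy_real Kxy.
have rows z : psi x * P y z = P x z * psi y.
  exact: kernel_proportional Kpsd Ksto Kpsi (projector_column_kernel z KP) Kxy.
have Pxx_real : (P x x)^* = P x x by rewrite -KP.1.
have rows_conj : psi x * P x y = P x x * psi y.
  have := congr1 Num.conj_op (rows x); rewrite !rmorphM /= -KP.1 Pxx_real.
  by rewrite !conj_Creal.
transitivity (psi x * P y y * psi x); first by ring.
rewrite rows; transitivity (psi x * P x y * psi y); first by ring.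
by rewrite rows_conj; ring.
Qed.

End StoquasticOperators.

Theorem lemma4p5 (C : numClosedFieldType) (n M : nat)
  (Hs : 'I_M -> qop C n) (Pi : 'I_M -> qop C n) (psi : qvec C n) :
  (forall a, self_adjoint (Hs a)) ->
  stoquastic Hs ->
  frustration_free Hs ->
  (forall a, zero_eig_projector (Hs a) (Pi a)) ->
  nonneg_state psi ->
  zero_vec (apply_op (sum_op Hs) psi) ->
  forall (x y : bits n) (a : 'I_M),
    x \in qsupport psi ->
    Hs a y x < 0 ->
    y \in qsupport psi /\
    psi y / psi x = sqrtC (Pi a y y / Pi a x x).
Proof.
move=> Hsa Hsto [Hpsd Hff] HPi [psi_ge0 _] Hpsi x y a.
rewrite !unfold_in /qsupport => psix Hyx.
have psix_neq0 : psi x != 0 by rewrite lt0r_neq0.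
have psi_neq0 : ~ zero_vec psi by move/(_ x)/eqP; apply/negP.
have Ka := Hff psi (zero_energy_ground_state Hpsd Hpsi psi_neq0) a.
have Ksto : stoquastic_op (Hs a) by move=> z t; apply: Hsto.
have psiy := stoquastic_kernel_pos Ksto psi_ge0 Ka psix Hyx.
have Hxy : Hs a x y < 0 by rewrite Hsa conj_Creal // ltr0_real.
have ratio := projector_diag_ratio (Hpsd a) Ksto (HPi a) Ka
  (ger0_real (psi_ge0 x)) (ger0_real (psi_ge0 y)) Hxy.
have Pxx_neq0 := projector_diag_neq0 (HPi a) Ka psix_neq0.
split=> //; rewrite -[Pi a y y / _](_ : (psi y / psi x) ^+ 2 = _).
  by rewrite sqrCK // divr_ge0 ?psi_ge0.
by rewrite expr_div_n; apply/eqP; rewrite eqr_div ?expf_neq0 // [_ * Pi a x x]mulrC -ratio.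
Qed.
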